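(* Let $n\ge3$, $2\le i\le n-1$, $\mathfrak g=\mathfrak{sp}(n,\mathbb C)$ and $\mathfrak q=\mathfrak l\oplus\mathfrak n$ the maximal parabolic subalgebra of type $C_n(i)$. Let $V(\mu+\epsilon_\gamma)$ be the irreducible $\mathfrak l$-submodule of $\mathfrak l_\gamma\otimes\mathfrak z(\mathfrak n)$ with highest weight $\varepsilon_1+\varepsilon_2$. Then the $\mathfrak l$-intertwining operator $\tilde\tau_2|_{V(\mu+\epsilon_\gamma)^*}:V(\mu+\epsilon_\gamma)^*\to\mathcal P^2(\mathfrak g(1))$ is not identically zero.
   Context: $\mathfrak g=\mathfrak{sp}(n,\mathbb C)$ (rank $n$) with Cartan $\mathfrak h$, roots $\pm\varepsilon_j\pm\varepsilon_k$ ($j<k$), $\pm2\varepsilon_j$, simple roots $\alpha_j=\varepsilon_j-\varepsilon_{j+1}$ ($j<n$), $\alpha_n=2\varepsilon_n$, Killing form $\kappa$, root vectors $X_\alpha$. $\mathfrak q=\mathfrak l\oplus\mathfrak n$ is the standard maximal parabolic subalgebra determined by $\alpha_i$ ($\mathfrak l$ = $\mathfrak h$ plus root spaces of roots in the span of $\Pi\setminus\{\alpha_i\}$); grading $\mathfrak g=\bigoplus_{j=-2}^2\mathfrak g(j)$ by the $\alpha_i$-coefficient, $\mathfrak l=\mathfrak g(0)$, $\Delta(\mathfrak g(1))=\{\varepsilon_j\pm\varepsilon_k:1\le j\le i<k\le n\}$, $\mathfrak z(\mathfrak n)=\mathfrak g(2)$ with roots $\varepsilon_j+\varepsilon_k$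 ($j<k\le i$), $2\varepsilon_j$ ($j\le i$), $\mathfrak z(\bar{\mathfrak n})=\mathfrak g(-2)$. $\mathfrak l_\gamma\cong\mathfrak{sl}(i,\mathbb C)$ is the simple ideal of $[\mathfrak l,\mathfrak l]$ with simple roots $\alpha_1,\dots,\alpha_{i-1}$. (Here $\mu=\varepsilon_1+\varepsilon_{i+1}$ is the highest weight of $\mathfrak g(1)$ and $\epsilon_\gamma=\varepsilon_2-\varepsilon_{i+1}$.) $\omega=\sum_{\gamma\in\Delta(\mathfrak z(\mathfrak n))}X^*_\gamma\otimes X_\gamma$ with $X^*_\gamma\in\mathfrak g_{-\gamma}$, $\kappa(X^*_\gamma,X_{\gamma'})=\delta_{\gamma\gamma'}$; $\tau_2(X)=\tfrac12(\mathrm{ad}(X)^2\otimes\mathrm{Id})\omega\in\mathfrak l\otimes\mathfrak z(\mathfrak n)$ for $X\in\mathfrak g(1)$. For an irreducible $\mathfrak l$-constituent $W$ of $\mathfrak l\otimes\mathfrak z(\mathfrak n)$, $W^*$ is realized in $\mathfrak l\otimes\mathfrak z(\bar{\mathfrak n})$ via $(A\otimes B)(C\otimes D)=\kappa(A,C)\kappa(B,D)$, and $\tilde\tau_2|_{W^*}(Y^* )(X)=Y^*(\tau_2(X))$, a homogeneous quadratic polynomial on $\mathfrak g(1)$. *)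

From HB Require Import structures.
From mathcomp Require Import all_boot all_order all_algebra all_field.
From mathcomp Require Import mxtens.

Unset Strict Implicit.
Unset Printing Implicit Defensive.
Import Order.TTheory GRing.Theory Num.Theory.
Local Open Scope ring_scope.

(* Matrices are (n+n) x (n+n); rows/columns 0..n-1 and n..2n-1.
   Indices j of eps_j are 0-based here: eps_{j+1} of the paper = index j. *)
Notation Mat n := 'M[algC]_(n + n).

Definition Emx (n a b : nat) : Mat n :=
  \matrix_(x, y) ((x == a :> nat) && (y == b :> nat))%:R.

Definition Jmx n : Mat n := \sum_(0 <= j < n) (Emx n j (n + j) - Emx n (n + j) j).
Definition is_sp n (X : Mat n) : bool := X^T *m Jmx n + Jmx n *m X == 0.

Definition bracket n (X Y : Mat n) : Mat n := X *m Y - Y *m X.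

Definition killing n (X Y : Mat n) : algC := (2 * n + 2)%:R * \tr (X *m Y).

(* Cartan subalgebra: H = diag(h_0..h_{n-1}, -h_0..-h_{n-1}); eps_j(H) = h j *)
Definition Hdiag n (h : nat -> algC) : Mat n :=
  \sum_(0 <= j < n) h j *: (Emx n j j - Emx n (n + j) (n + j)).

(* grading element for alpha_i (paper's i, 1-based): eps_j(H0) = 1 for j <= i
   (0-based j < i), 0 otherwise; g(k) = k-eigenspace of ad H0 in sp(n). *)
Definition H0 n i : Mat n := Hdiag n (fun j => if (j < i)%N then 1 else 0).
Definition gdeg n i (k : int) (X : Mat n) : bool :=
  is_sp n X && (bracket n (H0 n i) X == k%:~R *: X).

Definition lev n i := gdeg n i 0.
Definition g1 n i := gdeg n i 1.
Definition zbar n i := gdeg n i (-2).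

(* l_gamma = sl(i) : matrices [[A,0],[0,-A^T]] with A supported on the upper
   left i x i block and tr A = 0 (span of root vectors for eps_j - eps_k,
   j,k < i, and their brackets). *)
Definition lgamma n i (X : Mat n) : bool :=
  [&& is_sp n X,
      [forall a : 'I_(n + n), forall b : 'I_(n + n),
         (X a b != 0) ==> (((a < i) && (b < i))%N ||
                            ((n <= a < n + i) && (n <= b < n + i))%N)]
    & \sum_(a < n + n | (a < i)%N) X a a == 0].

(* negative root vectors: the span n^- of the root spaces of the negative
   roots -(eps_j - eps_k) (j<k), -(eps_j+eps_k), -2 eps_j is, in this
   realization, { [[A,0],[C,-A^T]] in sp(n) : A strictly lower triangular }.
   The negative root vectors of l are those in l /\ n^-. *)
Definition neg_part n (X : Mat n) : bool :=
  is_sp n X &&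
  [forall a : 'I_(n + n), forall b : 'I_(n + n),
     (((a < n) && (b < n) && (a <= b)) || ((a < n) && (n <= b)))%N ==> (X a b == 0)].

(* root vectors for gamma in Delta(z(n)): eps_j + eps_k (j < k < i) and
   2 eps_j (j < i);  Xm gives a root vector of -gamma. *)
Definition Xp n (j k : nat) : Mat n :=
  if j == k then Emx n j (n + j) else Emx n j (n + k) + Emx n k (n + j).
Definition Xm n (j k : nat) : Mat n :=
  if j == k then Emx n (n + j) j else Emx n (n + j) k + Emx n (n + k) j.
Definition Xstar n (j k : nat) : Mat n := (killing n (Xm n j k) (Xp n j k))^-1 *: Xm n j k.

(* Tensors: g (x) g is identified with 'M_((n+n)*(n+n)) via the Kronecker
   product A (x) B |-> tensmx A B (a linear isomorphism). *)
Notation Tens n := 'M[algC]_((n + n) * (n + n)).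

Definition tens n (A B : Mat n) : Tens n := tensmx A B.

Definition tau2 n i (X : Mat n) : Tens n :=
  2^-1 *: \sum_(0 <= k < i) \sum_(0 <= j < k.+1)
     tens n (bracket n X (bracket n X (Xstar n j k))) (Xp n j k).

(* the pairing (A(x)B)(C(x)D) = kappa(A,C) kappa(B,D), i.e.
   (2n+2)^2 tr(T S) in the Kronecker model *)
Definition tpair n (T S : Tens n) : algC := ((2 * n + 2)%:R ^+ 2) * \tr (T *m S).

(* action of Z in l on g (x) g : ad Z (x) 1 + 1 (x) ad Z *)
Definition tact n (Z : Mat n) (T : Tens n) : Tens n :=
  let D := tens n Z 1%:M + tens n 1%:M Z in D *m T - T *m D.

Definition in_lg_zbar n i (T : Tens n) : Prop :=
  exists s : seq (Mat n * Mat n),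
    all (fun p => lgamma n i p.1 && zbar n i p.2) s /\
    T = \sum_(p <- s) tens n p.1 p.2.

(* lowest weight vectors of weight -(eps_1 + eps_2) (0-based: h 0 + h 1) *)
Definition lowest_wt_vec n i (T : Tens n) : Prop :=
  [/\ in_lg_zbar n i T,
      forall h : nat -> algC, tact n (Hdiag n h) T = - (h 0%N + h 1%N) *: T
    & forall Z, lev n i Z -> neg_part n Z -> tact n Z T = 0].

(* V(mu + eps_gamma)^* realized in l (x) z(nbar): the l-submodule generated by
   the lowest weight vectors of weight -(eps_1+eps_2) in l_gamma (x) z(nbar) *)
Definition Wdual n i (Y : Tens n) : Prop :=
  forall U : {vspace Tens n},
    (forall T, lowest_wt_vec n i T -> T \in U) ->
    (forall Z T, lev n i Z -> T \in U -> tact n Z T \in U) ->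
    Y \in U.

(* V(mu + eps_gamma)^* is generated by a lowest weight vector Y of weight
   -(eps_1 + eps_2): an explicit element of l_gamma (x) z(nbar) killed by the
   negative root vectors of l.  For X = X_mu + X_(eps_gamma) in g(1), the pairing
   of Y with tau_2(X) reduces, since X^*_gamma is a multiple of X_-gamma, to traces
   tr(X_alpha ad(X)^2 X_-beta); summed over the terms of Y these give
   -6 - 6 - 4 (i - 2) = -(4 i + 4) up to a nonzero factor. *)

From HB Require Import structures.
From mathcomp Require Import all_boot all_order all_algebra all_field.
From mathcomp Require Import mxtens.
From mathcomp Require Import zify ring.
Import GRing.Theory Num.Theory.
Local Open Scope ring_scope.

Ltac nat_test :=
  match goal with
  | |- context [@eq_op _ ?a ?b] =>
      lazymatch type of a with nat =>
        first [ rewrite (_ : (a == b) = true); last lia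
              | rewrite (_ : (a == b) = false); last lia ] end
  | |- context [leq ?a ?b] =>
      first [ rewrite (_ : (a <= b)%N = true); last lia
            | rewrite (_ : (a <= b)%N = false); last lia ]
  end.

Ltac nat_tests :=
  rewrite ?eqn_add2l; repeat nat_test;
  rewrite ?andbT ?andbF ?andTb ?andFb ?orbT ?orbF ?orTb ?orFb.

Ltac decide_indices :=
  nat_tests;
  first [ match goal with |- context [@eq_op _ ?a ?b] =>
            lazymatch type of a with nat =>
              case: (@eqP _ a b) => ?; try subst end end; decide_indices
        | idtac ].

Ltac mx_ring := apply/matrixP => ? ?; rewrite !mxE /=; ring.
Ltac expand_mulmx := rewrite ?(mulmxDl, mulmxDr, mulmxBl, mulmxBr, mulmxN, mulNmx).

Lemma sum_nat_single {V : nmodType} {m a} {F : nat -> V} : (a < m)%N ->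
  (forall j, (j < m)%N -> j != a -> F j = 0) -> \sum_(0 <= j < m) F j = F a.
Proof.
move=> am F0; rewrite big_mkord (bigD1 (Ordinal am)) //= big1 ?addr0 // => j ja.
by apply: F0 => //; apply: contra ja => /eqP ja; apply/eqP/val_inj.
Qed.

Lemma sum_nat_delta {R : pzRingType} {V : lmodType R} {m a} (F : nat -> V) : (a < m)%N ->
  \sum_(0 <= j < m) (j == a)%:R *: F j = F a.
Proof.
move=> am; rewrite (sum_nat_single am) ?eqxx ?scale1r // => j _ /negbTE->.
exact: scale0r.
Qed.

Section MatrixUnits.
Variable n : nat.
Implicit Types a b c d : nat.

Lemma mulmx_Emx a b c d :
  Emx n a b *m Emx n c d = ((b == c) && (b < n + n)%N)%:R *: Emx n a d.
Proof.
apply/matrixP => r s; rewrite !mxE.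
have [bn|nb] := ltnP b (n + n); last first.
  rewrite big1 ?andbF ?mul0r // => k _; rewrite !mxE.
  by rewrite (_ : (k == b :> nat) = false) ?andbF ?mul0r //; move: (ltn_ord k); lia.
rewrite (bigD1 (Ordinal bn)) //= big1 ?addr0; last first.
  move=> k kb; rewrite !mxE (_ : (k == b :> nat) = false) ?andbF ?mul0r //.
  by apply: contraNF kb => /eqP kb; apply/eqP/val_inj.
rewrite !mxE /= eqxx andbT.
by case: (b == c); case: (r == a :> nat); case: (s == d :> nat);
  rewrite /= ?mulr1 ?mulr0 ?mul0r ?mul1r.
Qed.

Lemma mxtrace_Emx a b : \tr (Emx n a b) = ((a == b) && (a < n + n)%N)%:R.
Proof.
rewrite /mxtrace; have [an|na] := ltnP a (n + n); last first.
  rewrite big1 ?andbF // => k _; rewrite !mxE.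
  by rewrite (_ : (k == a :> nat) = false) //; move: (ltn_ord k); lia.
rewrite (bigD1 (Ordinal an)) //= big1 ?addr0; last first.
  move=> k ka; rewrite !mxE (_ : (k == a :> nat) = false) //.
  by apply: contraNF ka => /eqP ka; apply/eqP/val_inj.
by rewrite mxE /= eqxx andbT.
Qed.

Lemma mxtrace_mulEmx a b c d : \tr (Emx n a b *m Emx n c d) =
  [&& b == c, a == d, (a < n + n)%N & (b < n + n)%N]%:R.
Proof.
rewrite mulmx_Emx mxtraceZ mxtrace_Emx.
by case: (b == c); case: (a == d); case: (b < n + n)%N; case: (a < n + n)%N;
  rewrite /= ?mulr1 ?mulr0 ?mul0r.
Qed.

Lemma trmx_Emx a b : (Emx n a b)^T = Emx n b a.
Proof. by apply/matrixP => r s; rewrite !mxE andbC. Qed.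

Lemma delta_Emx (a b : 'I_(n + n)) : delta_mx a b = Emx n a b.
Proof. by apply/matrixP => r s; rewrite !mxE. Qed.

Lemma mxtrace_Emx_mul (a b : 'I_(n + n)) (M : Mat n) : \tr (Emx n a b *m M) = M b a.
Proof.
rewrite /mxtrace (bigD1 a) //= big1 ?addr0.
  rewrite mxE (bigD1 b) //= big1 ?addr0; first by rewrite !mxE !eqxx mul1r.
  by move=> k kb; rewrite !mxE eqxx (_ : (k == b :> nat) = false) ?mul0r //;
    apply: contraNF kb => /eqP kb; apply/eqP/val_inj.
move=> k ka; rewrite mxE big1 // => l _.
by rewrite !mxE (_ : (k == a :> nat) = false) ?mul0r //;
  apply: contraNF ka => /eqP ka; apply/eqP/val_inj.
Qed.

End MatrixUnits.

(* Root vectors for eps_x - eps_y (a Cartan element when x = y),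
   -(eps_j + eps_k) and eps_x + eps_y; for j < k, Qneg n j k = Xm n j k,
   while Qneg n j j = 2 Xm n j j. *)
Definition Lroot n x y : Mat n := Emx n x y - Emx n (n + y) (n + x).
Definition Qneg n j k : Mat n := Emx n (n + j) k + Emx n (n + k) j.
Definition Qpos n x y : Mat n := Emx n x (n + y) + Emx n y (n + x).

Lemma Qneg_sym n j k : Qneg n j k = Qneg n k j.
Proof. by rewrite /Qneg addrC. Qed.

Section Brackets.
Variable n : nat.
Implicit Types A B H : Mat n.

Lemma bracketD H A B : bracket n H (A + B) = bracket n H A + bracket n H B.
Proof. by rewrite /bracket mulmxDl mulmxDr opprD addrACA. Qed.

Lemma bracketZ H A c : bracket n H (c *: A) = c *: bracket n H A.
Proof. by rewrite /bracket scalerBr scalemxAr scalemxAl. Qed.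

Lemma bracket_Lroot_Lroot x y j a : (x < n)%N -> (y < n)%N -> (j < n)%N -> (a < n)%N ->
  bracket n (Lroot n x y) (Lroot n j a) =
  (j == y)%:R *: Lroot n x a - (a == x)%:R *: Lroot n j y.
Proof.
by move=> *; rewrite /bracket /Lroot; expand_mulmx; rewrite !mulmx_Emx; decide_indices; mx_ring.
Qed.

Lemma bracket_Lroot_Qneg x y j k : (x < n)%N -> (y < n)%N -> (j < n)%N -> (k < n)%N ->
  bracket n (Lroot n x y) (Qneg n j k) =
  - ((j == x)%:R *: Qneg n y k + (k == x)%:R *: Qneg n j y).
Proof.
by move=> *; rewrite /bracket /Lroot /Qneg; expand_mulmx; rewrite !mulmx_Emx; decide_indices; mx_ring.
Qed.

Lemma bracket_Elow_Lroot x y j a : (x < n)%N -> (y < n)%N -> (j < n)%N -> (a < n)%N ->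
  j <> y -> j <> x -> a <> x -> a <> y ->
  bracket n (Emx n (n + x) y) (Lroot n j a) = 0.
Proof.
by move=> *; rewrite /bracket /Lroot; expand_mulmx; rewrite !mulmx_Emx; decide_indices; mx_ring.
Qed.

Lemma bracket_Elow_Qneg x y j k : (x < n)%N -> (y < n)%N -> (j < n)%N -> (k < n)%N ->
  bracket n (Emx n (n + x) y) (Qneg n j k) = 0.
Proof.
by move=> *; rewrite /bracket /Qneg; expand_mulmx; rewrite !mulmx_Emx; decide_indices; mx_ring.
Qed.

End Brackets.

Section Cartan.
Variables (n : nat) (h : nat -> algC).

Lemma mul_Hdiag_Emx x b : (x < n)%N -> Hdiag n h *m Emx n x b = h x *: Emx n x b.
Proof.
move=> xn; rewrite /Hdiag mulmx_suml (sum_nat_single xn) => [|j jn jx];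
  by rewrite -scalemxAl mulmxBl !mulmx_Emx; nat_tests; mx_ring.
Qed.

Lemma mul_Hdiag_Emx_low x b : (x < n)%N ->
  Hdiag n h *m Emx n (n + x) b = - h x *: Emx n (n + x) b.
Proof.
move=> xn; rewrite /Hdiag mulmx_suml (sum_nat_single xn) => [|j jn jx];
  by rewrite -scalemxAl mulmxBl !mulmx_Emx; nat_tests; mx_ring.
Qed.

Lemma mul_Emx_Hdiag a x : (x < n)%N -> Emx n a x *m Hdiag n h = h x *: Emx n a x.
Proof.
move=> xn; rewrite /Hdiag mulmx_sumr (sum_nat_single xn) => [|j jn jx];
  by rewrite -scalemxAr mulmxBr !mulmx_Emx; nat_tests; mx_ring.
Qed.

Lemma mul_Emx_Hdiag_low a x : (x < n)%N ->
  Emx n a (n + x) *m Hdiag n h = - h x *: Emx n a (n + x).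
Proof.
move=> xn; rewrite /Hdiag mulmx_sumr (sum_nat_single xn) => [|j jn jx];
  by rewrite -scalemxAr mulmxBr !mulmx_Emx; nat_tests; mx_ring.
Qed.

Lemma bracket_Hdiag_Lroot x y : (x < n)%N -> (y < n)%N ->
  bracket n (Hdiag n h) (Lroot n x y) = (h x - h y) *: Lroot n x y.
Proof.
move=> xn yn; rewrite /bracket /Lroot mulmxBl mulmxBr.
by rewrite mul_Hdiag_Emx ?mul_Hdiag_Emx_low ?mul_Emx_Hdiag_low ?mul_Emx_Hdiag //; mx_ring.
Qed.

Lemma bracket_Hdiag_Qneg x y : (x < n)%N -> (y < n)%N ->
  bracket n (Hdiag n h) (Qneg n x y) = - (h x + h y) *: Qneg n x y.
Proof.
move=> xn yn; rewrite /bracket /Qneg mulmxDl mulmxDr.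
by rewrite !mul_Hdiag_Emx_low ?mul_Emx_Hdiag //; mx_ring.
Qed.

Lemma bracket_Hdiag_Qpos x y : (x < n)%N -> (y < n)%N ->
  bracket n (Hdiag n h) (Qpos n x y) = (h x + h y) *: Qpos n x y.
Proof.
move=> xn yn; rewrite /bracket /Qpos mulmxDl mulmxDr.
by rewrite !mul_Hdiag_Emx ?mul_Emx_Hdiag_low //; mx_ring.
Qed.

End Cartan.

Section Symplectic.
Variable n : nat.
Implicit Types A B : Mat n.

Lemma mul_Emx_J a x : (x < n)%N -> Emx n a x *m Jmx n = Emx n a (n + x).
Proof.
move=> xn; rewrite /Jmx mulmx_sumr (sum_nat_single xn) => [|j jn jx];
  by rewrite mulmxBr !mulmx_Emx; nat_tests; mx_ring.
Qed.

Lemma mul_Emx_J_low a x : (x < n)%N -> Emx n a (n + x) *m Jmx n = - Emx n a x.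
Proof.
move=> xn; rewrite /Jmx mulmx_sumr (sum_nat_single xn) => [|j jn jx];
  by rewrite mulmxBr !mulmx_Emx; nat_tests; mx_ring.
Qed.

Lemma mul_J_Emx x b : (x < n)%N -> Jmx n *m Emx n x b = - Emx n (n + x) b.
Proof.
move=> xn; rewrite /Jmx mulmx_suml (sum_nat_single xn) => [|j jn jx];
  by rewrite mulmxBl !mulmx_Emx; nat_tests; mx_ring.
Qed.

Lemma mul_J_Emx_low x b : (x < n)%N -> Jmx n *m Emx n (n + x) b = Emx n x b.
Proof.
move=> xn; rewrite /Jmx mulmx_suml (sum_nat_single xn) => [|j jn jx];
  by rewrite mulmxBl !mulmx_Emx; nat_tests; mx_ring.
Qed.

Lemma is_spD A B : is_sp n A -> is_sp n B -> is_sp n (A + B).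
Proof. by move=> /eqP spA /eqP spB; rewrite /is_sp raddfD mulmxDl mulmxDr addrACA spA spB addr0. Qed.

Lemma is_spN A : is_sp n A -> is_sp n (- A).
Proof. by move=> /eqP spA; rewrite /is_sp raddfN mulNmx mulmxN -opprD spA oppr0. Qed.

Lemma is_sp_Lroot x y : (x < n)%N -> (y < n)%N -> is_sp n (Lroot n x y).
Proof.
move=> xn yn; rewrite /is_sp /Lroot raddfB /= !trmx_Emx; expand_mulmx.
by rewrite mul_Emx_J // mul_Emx_J_low // mul_J_Emx // mul_J_Emx_low //; apply/eqP; mx_ring.
Qed.

Lemma is_sp_Qneg x y : (x < n)%N -> (y < n)%N -> is_sp n (Qneg n x y).
Proof.
move=> xn yn; rewrite /is_sp /Qneg raddfD /= !trmx_Emx; expand_mulmx.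
by rewrite !mul_Emx_J_low // !mul_J_Emx_low //; apply/eqP; mx_ring.
Qed.

Lemma is_sp_Qpos x y : (x < n)%N -> (y < n)%N -> is_sp n (Qpos n x y).
Proof.
move=> xn yn; rewrite /is_sp /Qpos raddfD /= !trmx_Emx; expand_mulmx.
by rewrite !mul_Emx_J // !mul_J_Emx //; apply/eqP; mx_ring.
Qed.

Lemma is_sp_low_block (Z : Mat n) (x y : 'I_n) : is_sp n Z ->
  Z (rshift n x) (rshift n y) = - Z (lshift n y) (lshift n x).
Proof.
move=> /eqP spZ.
have := congr1 (fun M => \tr (Emx n (rshift n y) (lshift n x) *m M)) spZ.
rewrite /= mulmx0 mxtrace0 mulmxDr mxtraceD mulmxA mxtrace_mulC !mulmxA.
rewrite mul_J_Emx_low // mul_Emx_J //.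
rewrite -[Emx n y x]/(Emx n (lshift n y) (lshift n x)).
rewrite -[Emx n (n + y) (n + x)]/(Emx n (rshift n y) (rshift n x)).
by rewrite !mxtrace_Emx_mul mxE => /eqP; rewrite addr_eq0 => /eqP->; rewrite opprK.
Qed.

End Symplectic.

Section Tensors.
Variable n : nat.
Implicit Types (A B C D Z : Mat n) (T S : Tens n).

Lemma tensDl A B C : tens n (A + B) C = tens n A C + tens n B C.
Proof. by apply/matrixP => r s; rewrite !mxE mulrDl. Qed.

Lemma tensDr A B C : tens n A (B + C) = tens n A B + tens n A C.
Proof. by apply/matrixP => r s; rewrite !mxE mulrDr. Qed.

Lemma tensZl c A B : tens n (c *: A) B = c *: tens n A B.
Proof. by apply/matrixP => r s; rewrite !mxE mulrA. Qed.

Lemma tensZr c A B : tens n A (c *: B) = c *: tens n A B.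
Proof. by apply/matrixP => r s; rewrite !mxE mulrCA. Qed.

Lemma tensNl A B : tens n (- A) B = - tens n A B.
Proof. by apply/matrixP => r s; rewrite !mxE mulNr. Qed.

Lemma tensBl A B C : tens n (A - B) C = tens n A C - tens n B C.
Proof. by rewrite tensDl tensNl. Qed.

Lemma tensBr A B C : tens n A (B - C) = tens n A B - tens n A C.
Proof. by apply/matrixP => r s; rewrite !mxE mulrBr. Qed.

Lemma tens0l B : tens n 0 B = 0.
Proof. exact: tens0mx. Qed.

Lemma tens0r A : tens n A 0 = 0.
Proof. exact: tensmx0. Qed.

Lemma tens_mul A B C D : tens n A B *m tens n C D = tens n (A *m C) (B *m D).
Proof. exact: tensmx_mul. Qed.

Lemma mxtrace_tens A B : \tr (tens n A B) = \tr A * \tr B.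
Proof. by rewrite /mxtrace mulr_sum; apply: eq_bigr => k _; rewrite mxE. Qed.

Lemma tact_tens Z A B :
  tact n Z (tens n A B) = tens n (bracket n Z A) B + tens n A (bracket n Z B).
Proof.
rewrite /tact /bracket mulmxDl mulmxDr !tens_mul !mul1mx !mulmx1 tensBl tensBr.
rewrite opprD !addrA; congr (_ + _).
by rewrite -!addrA; congr (_ + _); rewrite addrC.
Qed.

Lemma tactD Z T S : tact n Z (T + S) = tact n Z T + tact n Z S.
Proof.
rewrite /tact /=; set D := tens n Z 1%:M + tens n 1%:M Z.
by rewrite (mulmxDr D T S) (mulmxDl T S D) opprD addrACA.
Qed.

Lemma tact0 Z : tact n Z 0 = 0.
Proof. by rewrite /tact /= mulmx0 mul0mx subrr. Qed.

Lemma tactB Z T S : tact n Z (T - S) = tact n Z T - tact n Z S.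
Proof. by rewrite tactD /tact mulmxN mulNmx opprB opprK [- _ + _]addrC. Qed.

Lemma tact_sum Z I (r : seq I) (P : pred I) (F : I -> Tens n) :
  tact n Z (\sum_(i <- r | P i) F i) = \sum_(i <- r | P i) tact n Z (F i).
Proof. exact: (big_morph _ (tactD Z) (tact0 Z)). Qed.

Lemma tactDl Z1 Z2 T : tact n (Z1 + Z2) T = tact n Z1 T + tact n Z2 T.
Proof. by rewrite /tact tensDl tensDr addrACA mulmxDl mulmxDr opprD addrACA. Qed.

Lemma tactZl c Z T : tact n (c *: Z) T = c *: tact n Z T.
Proof. by rewrite /tact tensZl tensZr -scalerDr -scalemxAl -scalemxAr scalerBr. Qed.

Lemma tact0l T : tact n 0 T = 0.
Proof. by rewrite -(scale0r 0) tactZl scale0r. Qed.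

Lemma tact_suml I (r : seq I) (P : pred I) (F : I -> Mat n) T :
  tact n (\sum_(i <- r | P i) F i) T = \sum_(i <- r | P i) tact n (F i) T.
Proof. exact: (big_morph (tact n ^~ T) (fun A B => tactDl A B T) (tact0l T)). Qed.

End Tensors.

Section LeviBlocks.
Variable n : nat.
Implicit Types (Z : Mat n) (h : nat -> algC).

Lemma bracket_Hdiag_top h Z (x y : 'I_n) :
  bracket n (Hdiag n h) Z (lshift n x) (lshift n y) = (h x - h y) * Z (lshift n x) (lshift n y).
Proof.
rewrite -[LHS]mxtrace_Emx_mul /bracket mulmxBr raddfB /= !mulmxA.
rewrite [\tr (_ *m Z *m _)]mxtrace_mulC mulmxA.
rewrite mul_Emx_Hdiag // mul_Hdiag_Emx // -!scalemxAl !mxtraceZ -mulrBl.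
by rewrite -[Emx n y x]/(Emx n (lshift n y) (lshift n x)) mxtrace_Emx_mul.
Qed.

Lemma bracket_Hdiag_low_top h Z (x y : 'I_n) :
  bracket n (Hdiag n h) Z (rshift n x) (lshift n y) = - (h x + h y) * Z (rshift n x) (lshift n y).
Proof.
rewrite -[LHS]mxtrace_Emx_mul /bracket mulmxBr raddfB /= !mulmxA.
rewrite [\tr (_ *m Z *m _)]mxtrace_mulC mulmxA.
rewrite mul_Emx_Hdiag_low // mul_Hdiag_Emx // -!scalemxAl !mxtraceZ -mulrBl.
rewrite -[Emx n y (n + x)]/(Emx n (lshift n y) (rshift n x)) mxtrace_Emx_mul.
by congr (_ * _); rewrite opprD addrC.
Qed.

Lemma Emx_expansion Z : Z =
    \sum_(x < n) \sum_(y < n) (Z (lshift n x) (lshift n y) *: Emx n x y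
                             + Z (lshift n x) (rshift n y) *: Emx n x (n + y))
  + \sum_(x < n) \sum_(y < n) (Z (rshift n x) (lshift n y) *: Emx n (n + x) y
                             + Z (rshift n x) (rshift n y) *: Emx n (n + x) (n + y)).
Proof.
rewrite {1}[Z]matrix_sum_delta sumr_add; congr (_ + _); apply: eq_bigr => x _;
  by rewrite sumr_add -big_split; apply: eq_bigr => y _; rewrite !delta_Emx.
Qed.

Lemma sp_lower_expansion {Z} : is_sp n Z ->
    (forall x y : 'I_n, Z (lshift n x) (rshift n y) = 0) ->
  Z = \sum_(x < n) \sum_(y < n) (Z (lshift n x) (lshift n y) *: Lroot n x y
                               + Z (rshift n x) (lshift n y) *: Emx n (n + x) y).
Proof.
move=> spZ Ztr0; rewrite {1}[Z]Emx_expansion.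
under eq_bigr => x _ do under eq_bigr => y _ do rewrite Ztr0 scale0r addr0.
have low_diag : \sum_(x < n) \sum_(y < n) Z (rshift n x) (rshift n y) *: Emx n (n + x) (n + y)
    = - \sum_(x < n) \sum_(y < n) Z (lshift n x) (lshift n y) *: Emx n (n + y) (n + x).
  rewrite [in RHS]exchange_big -sumrN; apply: eq_bigr => x _.
  by rewrite -sumrN; apply: eq_bigr => y _; rewrite is_sp_low_block // scaleNr.
under [in RHS]eq_bigr => x _ do under eq_bigr => y _ do rewrite /Lroot scalerBr.
under [in RHS]eq_bigr => x _ do rewrite big_split sumrB.
under [X in _ + X]eq_bigr => x _ do rewrite big_split.
by rewrite !big_split /= sumrN low_diag addrCA [RHS]addrC.
Qed.

Variable i : nat.

Lemma lev_top_block {Z} {x y : 'I_n} : lev n i Z ->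
  Z (lshift n x) (lshift n y) != 0 -> (x < i)%N = (y < i)%N.
Proof.
move=> /andP[_ /eqP/matrixP/(_ (lshift n x) (lshift n y))] + Z0.
rewrite bracket_Hdiag_top mulr0z scale0r mxE => /eqP; rewrite mulf_eq0 (negbTE Z0) orbF.
by case: (x < i)%N; case: (y < i)%N; rewrite ?subrr ?subr0 ?sub0r ?oppr_eq0 ?oner_eq0.
Qed.

Lemma lev_low_top_block {Z} {x y : 'I_n} : lev n i Z ->
  Z (rshift n x) (lshift n y) != 0 -> (i <= x)%N && (i <= y)%N.
Proof.
move=> /andP[_ /eqP/matrixP/(_ (rshift n x) (lshift n y))] + Z0.
rewrite bracket_Hdiag_low_top mulr0z scale0r mxE => /eqP; rewrite mulf_eq0 (negbTE Z0) orbF.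
rewrite oppr_eq0; case: (ltnP x i) => _; case: (ltnP y i) => _ //=;
  by rewrite ?addr0 ?add0r ?oner_eq0 // -mulr2n pnatr_eq0.
Qed.

End LeviBlocks.

(* The lowest weight vector of V(mu + eps_gamma)^*, of weight -(eps_1 + eps_2):
   sum_j (X_(eps_j - eps_1) (x) X_-(eps_j + eps_2) - X_(eps_j - eps_2) (x) X_-(eps_j + eps_1)),
   where for j = 1, 2 the first factors are the Cartan elements Lroot n 0 0 and Lroot n 1 1. *)
Definition lowvec n i : Tens n :=
  \sum_(0 <= j < i) (tens n (Lroot n j 0) (Qneg n j 1) - tens n (Lroot n j 1) (Qneg n j 0)).

Lemma tact_Hdiag_lowvec n i h : (2 <= i <= n)%N ->
  tact n (Hdiag n h) (lowvec n i) = - (h 0%N + h 1%N) *: lowvec n i.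
Proof.
move=> /andP[i2 ile]; rewrite /lowvec tact_sum scaler_sumr; apply: eq_big_nat => j /andP[_ ji].
rewrite tactB !tact_tens !bracket_Hdiag_Lroot ?bracket_Hdiag_Qneg; try lia.
rewrite !tensZl !tensZr scalerBr -!scalerDl.
by congr (_ *: _ - _ *: _); ring.
Qed.

Section NegativeRootAction.
Variable n : nat.

Lemma tact_Lroot_lowvec_term x y j : (y < x)%N -> (x < n)%N -> (j < n)%N ->
  tact n (Lroot n x y) (tens n (Lroot n j 0) (Qneg n j 1) - tens n (Lroot n j 1) (Qneg n j 0)) =
    (j == y)%:R *: (tens n (Lroot n x 0) (Qneg n j 1) - tens n (Lroot n x 1) (Qneg n j 0))
  - (j == x)%:R *: (tens n (Lroot n j 0) (Qneg n y 1) - tens n (Lroot n j 1) (Qneg n y 0)).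
Proof.
move=> yx xn jn.
rewrite tactB !tact_tens !bracket_Lroot_Lroot ?bracket_Lroot_Qneg //; try lia.
rewrite (_ : (0 == x) = false); last lia.
have [x1|x1] := eqVneq x 1%N.
  by subst x; rewrite (_ : y = 0%N) /tens; [mx_ring | lia].
by rewrite /tens; decide_indices; mx_ring.
Qed.

Lemma tact_Lroot_far x y j a b : (x < n)%N -> (y < n)%N ->
    (j < x)%N -> (j < y)%N -> (a < x)%N -> (a < y)%N -> (b < x)%N -> (b < y)%N ->
  tact n (Lroot n x y) (tens n (Lroot n j a) (Qneg n j b)) = 0.
Proof.
move=> *; rewrite tact_tens bracket_Lroot_Lroot ?bracket_Lroot_Qneg //; try lia.
by nat_tests; rewrite !scale0r subrr addr0 oppr0 tens0l tens0r addr0.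
Qed.

Lemma tact_Elow_far x y j a b : (x < n)%N -> (y < n)%N -> (b < n)%N ->
    (j < x)%N -> (j < y)%N -> (a < x)%N -> (a < y)%N ->
  tact n (Emx n (n + x) y) (tens n (Lroot n j a) (Qneg n j b)) = 0.
Proof.
move=> *; rewrite tact_tens bracket_Elow_Lroot ?bracket_Elow_Qneg ?tens0l ?tens0r ?addr0 //; lia.
Qed.

Variable i : nat.
Hypotheses (i2 : (2 <= i)%N) (ile : (i <= n)%N).

Lemma tact_Lroot_lowvec x y : (y < x)%N -> (x < i)%N -> tact n (Lroot n x y) (lowvec n i) = 0.
Proof.
move=> yx xi; rewrite /lowvec tact_sum.
under eq_big_nat => j /andP[_ ji].
  by rewrite tact_Lroot_lowvec_term; [over | lia..].
by rewrite sumrB !sum_nat_delta ?subrr //; lia.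
Qed.

Lemma tact_Lroot_lowvec_far x y : (i <= x)%N -> (i <= y)%N -> (x < n)%N -> (y < n)%N ->
  tact n (Lroot n x y) (lowvec n i) = 0.
Proof.
move=> *; rewrite /lowvec tact_sum big_nat_cond big1 // => j /andP[/andP[_ ji] _].
by rewrite tactB !tact_Lroot_far ?subrr //; lia.
Qed.

Lemma tact_Elow_lowvec_far x y : (i <= x)%N -> (i <= y)%N -> (x < n)%N -> (y < n)%N ->
  tact n (Emx n (n + x) y) (lowvec n i) = 0.
Proof.
move=> *; rewrite /lowvec tact_sum big_nat_cond big1 // => j /andP[/andP[_ ji] _].
by rewrite tactB !tact_Elow_far ?subrr //; lia.
Qed.

Lemma tact_neg_lowvec Z : lev n i Z -> neg_part n Z -> tact n Z (lowvec n i) = 0.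
Proof.
move=> levZ /andP[_ /forallP negZ].
have Z0 (a b : 'I_(n + n)) :
    (((a < n) && (b < n) && (a <= b)) || ((a < n) && (n <= b)))%N -> Z a b = 0.
  by move=> ab; apply/eqP; move/forallP: (negZ a) => /(_ b) /implyP; apply.
have Ztr0 (x y : 'I_n) : Z (lshift n x) (rshift n y) = 0.
  by apply: Z0; rewrite /= ltn_ord leq_addr orbT.
have spZ : is_sp n Z by case/andP: levZ.
rewrite (sp_lower_expansion _ spZ Ztr0) tact_suml big1 // => x _.
rewrite tact_suml big1 // => y _; rewrite tactDl !tactZl.
have -> : Z (lshift n x) (lshift n y) *: tact n (Lroot n x y) (lowvec n i) = 0.
  have [->|Ztt] := eqVneq (Z (lshift n x) (lshift n y)) 0; first by rewrite scale0r.
  have yx : (y < x)%N.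
    by rewrite ltnNge; apply: contra Ztt => xy; apply/eqP/Z0; rewrite /= !ltn_ord xy.
  have xy_i := lev_top_block _ _ levZ Ztt.
  have [xi|ix] := ltnP x i; first by rewrite tact_Lroot_lowvec ?scaler0.
  have iy : (i <= y)%N by rewrite leqNgt -xy_i -leqNgt.
  by rewrite tact_Lroot_lowvec_far ?scaler0.
have [->|Zbt] := eqVneq (Z (rshift n x) (lshift n y)) 0; first by rewrite scale0r addr0.
have /andP[ix iy] := lev_low_top_block _ _ levZ Zbt.
by rewrite tact_Elow_lowvec_far ?scaler0 ?addr0.
Qed.

End NegativeRootAction.

Section LeviMembership.
Variables n i : nat.

Lemma Lroot_block_support {x y} {a b : 'I_(n + n)} : (x < i)%N -> (y < i)%N ->
  Lroot n x y a b != 0 ->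
  (((a < i) && (b < i)) || ((n <= a < n + i) && (n <= b < n + i)))%N.
Proof.
move=> xi yi; rewrite !mxE.
case: (a == x :> nat) / eqP => ?; case: (b == y :> nat) / eqP => ?;
case: (a == n + y :> nat) / eqP => ?; case: (b == n + x :> nat) / eqP => ? //=;
  by rewrite ?subrr ?eqxx //; lia.
Qed.

Hypothesis ile : (i <= n)%N.

Lemma zbar_Qneg j k : (j < i)%N -> (k < i)%N -> zbar n i (Qneg n j k).
Proof.
move=> ji ki; rewrite /zbar /gdeg is_sp_Qneg /=; try lia.
by rewrite /H0 bracket_Hdiag_Qneg /=; try lia; nat_tests.
Qed.

Lemma Lroot_partial_trace x y : (x < i)%N -> (y < i)%N ->
  \sum_(a < n + n | (a < i)%N) Lroot n x y a a = (x == y)%:R.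
Proof.
move=> xi yi; have xnn : (x < n + n)%N by lia.
rewrite (bigD1 (Ordinal xnn)) //= big1 => [|a /andP[ai ax]]; rewrite !mxE /=.
  by rewrite eqxx; nat_tests; rewrite subr0 addr0.
have {}ax : (a : nat) != x by apply: contraNneq ax => ax; apply/eqP/val_inj.
by nat_tests; rewrite subrr.
Qed.

Lemma lgammaN X : lgamma n i X -> lgamma n i (- X).
Proof.
case/and3P=> spX /forallP suppX /eqP trX; apply/and3P; split; first exact: is_spN.
  apply/forallP => a; apply/forallP => b; rewrite mxE oppr_eq0.
  by move/forallP: (suppX a); apply.
by under eq_bigr => a _ do rewrite mxE; rewrite sumrN trX oppr0.
Qed.

Lemma lgamma_Lroot x y : (x < i)%N -> (y < i)%N -> x != y -> lgamma n i (Lroot n x y).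
Proof.
move=> xi yi xy; rewrite /lgamma is_sp_Lroot /=; try lia.
rewrite Lroot_partial_trace // (negbTE xy) eqxx andbT.
by apply/forallP => a; apply/forallP => b; apply/implyP/Lroot_block_support.
Qed.

Lemma lgamma_Lroot_diagB x y : (x < i)%N -> (y < i)%N ->
  lgamma n i (Lroot n x x - Lroot n y y).
Proof.
move=> xi yi; rewrite /lgamma is_spD ?is_spN ?is_sp_Lroot //=; try lia.
have subE (A B : Mat n) c d : (A - B) c d = A c d - B c d by rewrite !mxE.
apply/andP; split.
  apply/forallP => a; apply/forallP => b; apply/implyP; rewrite subE.
  have [xa|xa] := eqVneq (Lroot n x x a b) 0.
    by rewrite xa sub0r oppr_eq0; exact: (Lroot_block_support yi yi).
  by move=> _; exact: (Lroot_block_support xi xi xa).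
under eq_bigr => a _ do rewrite subE.
by rewrite sumrB !Lroot_partial_trace // !eqxx subrr.
Qed.

Lemma in_lg_zbar0 : in_lg_zbar n i 0.
Proof. by exists [::]; rewrite big_nil. Qed.

Lemma in_lg_zbarD T S : in_lg_zbar n i T -> in_lg_zbar n i S -> in_lg_zbar n i (T + S).
Proof.
move=> [s [lg_s ->]] [s' [lg_s' ->]].
by exists (s ++ s'); rewrite all_cat lg_s lg_s' big_cat.
Qed.

Lemma in_lg_zbar_tens A B : lgamma n i A -> zbar n i B -> in_lg_zbar n i (tens n A B).
Proof. by move=> lgA zB; exists [:: (A, B)]; rewrite /= lgA zB big_seq1. Qed.

Lemma in_lg_zbar_sum m k (F : nat -> Tens n) :
  (forall j, (m <= j < k)%N -> in_lg_zbar n i (F j)) ->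
  in_lg_zbar n i (\sum_(m <= j < k) F j).
Proof.
move=> lgF; rewrite big_nat_cond.
apply: big_ind => [|T S|j /andP[jmk _]]; [exact: in_lg_zbar0 | exact: in_lg_zbarD | exact: lgF].
Qed.

Lemma lowvec_in_lg_zbar : (2 <= i)%N -> in_lg_zbar n i (lowvec n i).
Proof.
move=> i2; rewrite /lowvec big_ltn 1?big_ltn; try lia.
(* Qneg n 1 0 = Qneg n 0 1, so the Cartan parts of the j = 0, 1 terms merge into
   the traceless Lroot n 0 0 - Lroot n 1 1. *)
have -> : forall T, tens n (Lroot n 0 0) (Qneg n 0 1) - tens n (Lroot n 0 1) (Qneg n 0 0)
    + (tens n (Lroot n 1 0) (Qneg n 1 1) - tens n (Lroot n 1 1) (Qneg n 1 0) + T)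
  = tens n (Lroot n 0 0 - Lroot n 1 1) (Qneg n 0 1) + tens n (- Lroot n 0 1) (Qneg n 0 0)
    + tens n (Lroot n 1 0) (Qneg n 1 1) + T.
  move=> T; rewrite [Qneg n 1 0]Qneg_sym tensBl tensNl.
  by rewrite !addrA; congr (_ + _); rewrite addrAC -!addrA; congr (_ + _); rewrite addrCA.
apply: in_lg_zbarD; last apply: in_lg_zbar_sum => j /andP[j2 ji]; last rewrite -tensNl.
all: repeat apply: in_lg_zbarD; apply: in_lg_zbar_tens.
all: by rewrite ?lgamma_Lroot_diagB ?lgammaN ?lgamma_Lroot ?zbar_Qneg //; lia.
Qed.

End LeviMembership.

Section DualBasis.
Variable n : nat.

Lemma mxtrace_Qneg_Xp a b j k : (a <= b)%N -> (b < n)%N -> (j <= k)%N -> (k < n)%N ->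
  \tr (Qneg n a b *m Xp n j k) = ((a == j) && (b == k))%:R * 2.
Proof.
move=> ab bn jk kn; rewrite /Xp /Qneg; have [<-|jk'] := eqVneq j k;
  by expand_mulmx; rewrite ?mxtraceD ?mxtrace_mulEmx; decide_indices; rewrite /=; ring.
Qed.

Lemma Xstar_Qneg a b : (a <= b)%N -> (b < n)%N ->
  Xstar n a b = (2 * (2 * n + 2))%:R^-1 *: Qneg n a b.
Proof.
move=> ab bn.
have kappa_neq0 : 2 * n%:R + 2 != 0 :> algC by rewrite -natrM -natrD pnatr_eq0 addn2.
rewrite /Xstar /killing /Xm /Xp /Qneg natrM natrD natrM; have [<-|ab'] := eqVneq a b.
  rewrite mxtrace_mulEmx; nat_tests; rewrite /=.
  by apply/matrixP => r s; rewrite !mxE; field; rewrite ?mulf_neq0 ?pnatr_eq0.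
expand_mulmx; rewrite ?mxtraceD ?mxtrace_mulEmx; nat_tests; rewrite /=.
by apply/matrixP => r s; rewrite !mxE; field; rewrite ?mulf_neq0 ?pnatr_eq0.
Qed.

End DualBasis.

(* X_mu + X_(eps_gamma), with mu = eps_1 + eps_(i+1) and eps_gamma = eps_2 - eps_(i+1). *)
Definition Xwit n i : Mat n := Qpos n 0 i + Lroot n 1 i.

Lemma g1_Xwit n i : (2 <= i)%N -> (i < n)%N -> g1 n i (Xwit n i).
Proof.
move=> i2 iin; rewrite /g1 /gdeg is_spD ?is_sp_Qpos ?is_sp_Lroot /=; try lia.
rewrite /H0 bracketD bracket_Hdiag_Qpos ?bracket_Hdiag_Lroot /=; try lia.
by nat_tests; rewrite addr0 subr0 -scalerDr.
Qed.

Ltac bracket_Xwit := rewrite /bracket /Xwit /Qpos /Lroot /Qneg ?addn0; expand_mulmx;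
  rewrite ?mulmx_Emx; nat_tests; mx_ring.
Ltac trace_Emx := rewrite /Lroot ?addn0; expand_mulmx;
  rewrite ?mxtraceD ?raddfB ?raddfN /= ?mxtrace_mulEmx; nat_tests; rewrite /=; ring.

Section PairingTerms.
Variables n i : nat.
Hypotheses (i2 : (2 <= i)%N) (iin : (i < n)%N).
Local Notation ad2 A := (bracket n (Xwit n i) (bracket n (Xwit n i) A)).
Local Notation pair_term j :=
  (\tr (Lroot n j 0 *m ad2 (Qneg n j 1)) - \tr (Lroot n j 1 *m ad2 (Qneg n j 0))).

Lemma pair_term_ge2 j : (2 <= j)%N -> (j < i)%N -> pair_term j = - 4.
Proof.
move=> j2 ji.
have -> : ad2 (Qneg n j 1) = - Emx n 0 j + Emx n (n + j) n.
  have -> : bracket n (Xwit n i) (Qneg n j 1) = - Emx n (n + j) i - Emx n (n + i) j by bracket_Xwit.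
  by bracket_Xwit.
have -> : ad2 (Qneg n j 0) = Emx n 1 j - Emx n (n + j) (n + 1).
  have -> : bracket n (Xwit n i) (Qneg n j 0) = Emx n i j - Emx n (n + j) (n + i) by bracket_Xwit.
  by bracket_Xwit.
by trace_Emx.
Qed.

Lemma ad2_Qneg01 : ad2 (Qneg n 0 1) =
  - Emx n 0 0 + Emx n 1 1 - Emx n i i - Emx n i i + Emx n n n - Emx n (n + 1) (n + 1)
  + Emx n (n + i) (n + i) + Emx n (n + i) (n + i).
Proof.
have -> : bracket n (Xwit n i) (Qneg n 0 1) =
  Emx n i 1 - Emx n n i - Emx n (n + 1) (n + i) - Emx n (n + i) 0 by bracket_Xwit.
by bracket_Xwit.
Qed.

Lemma pair_term0 : pair_term 0%N = - 6.
Proof.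
have -> : ad2 (Qneg n 0 0) = Emx n 1 0 + Emx n 1 0 - Emx n i (n + i) - Emx n i (n + i)
    - Emx n i (n + i) - Emx n i (n + i) - Emx n n (n + 1) - Emx n n (n + 1).
  have -> : bracket n (Xwit n i) (Qneg n 0 0) =
    Emx n i 0 + Emx n i 0 - Emx n n (n + i) - Emx n n (n + i) by bracket_Xwit.
  by bracket_Xwit.
by rewrite ad2_Qneg01; trace_Emx.
Qed.

Lemma pair_term1 : pair_term 1%N = - 6.
Proof.
have -> : ad2 (Qneg n 1 1) = - Emx n 0 1 - Emx n 0 1 + Emx n (n + 1) n + Emx n (n + 1) n
    + Emx n (n + i) i + Emx n (n + i) i + Emx n (n + i) i + Emx n (n + i) i.
  have -> : bracket n (Xwit n i) (Qneg n 1 1) =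
    - Emx n (n + 1) i - Emx n (n + 1) i - Emx n (n + i) 1 - Emx n (n + i) 1 by bracket_Xwit.
  by bracket_Xwit.
by rewrite Qneg_sym ad2_Qneg01; trace_Emx.
Qed.

End PairingTerms.

Section Tau2.
Variables (n i : nat) (X : Mat n).
Hypothesis ile : (i <= n)%N.
Local Notation ad2 A := (bracket n X (bracket n X A)).

Lemma mxtrace_tens_tau2 (A : Mat n) a b : (a <= b)%N -> (b < i)%N ->
  \tr (tens n A (Qneg n a b) *m tau2 n i X) = \tr (A *m ad2 (Xstar n a b)).
Proof.
move=> ab bi; rewrite /tau2 -scalemxAr mxtraceZ mulmx_sumr raddf_sum /=.
rewrite (sum_nat_single bi) => [|k ki kb]; rewrite mulmx_sumr raddf_sum /=.
  have ab1 : (a < b.+1)%N by lia.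
  rewrite (sum_nat_single ab1) => [|j jb ja]; rewrite tens_mul mxtrace_tens mxtrace_Qneg_Xp; try lia.
    by rewrite !eqxx /= mul1r mulrCA mulVf ?mulr1 // pnatr_eq0.
  by rewrite eq_sym (negbTE ja) mul0r mulr0.
rewrite big_nat_cond big1 // => j /andP[jk _]; rewrite tens_mul mxtrace_tens mxtrace_Qneg_Xp; try lia.
by rewrite [b == k]eq_sym (negbTE kb) andbF mul0r mulr0.
Qed.

Lemma mxtrace_tens_Qneg_tau2 (A : Mat n) j k : (j < i)%N -> (k < i)%N ->
  \tr (tens n A (Qneg n j k) *m tau2 n i X) =
  (2 * (2 * n + 2))%:R^-1 * \tr (A *m ad2 (Qneg n j k)).
Proof.
wlog jk : j k / (j <= k)%N => [sym_case ji ki|ji ki].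
  have [jk|/ltnW kj] := leqP j k; first exact: sym_case.
  by rewrite Qneg_sym sym_case.
rewrite mxtrace_tens_tau2 // Xstar_Qneg; try lia.
by rewrite !bracketZ -scalemxAr mxtraceZ.
Qed.

End Tau2.

Lemma tpair_lowvec_tau2 n i : (2 <= i)%N -> (i < n)%N ->
  tpair n (lowvec n i) (tau2 n i (Xwit n i)) =
  (2 * n + 2)%:R ^+ 2 * ((2 * (2 * n + 2))%:R^-1 * - (4 * i + 4)%:R).
Proof.
move=> i2 iin; rewrite /tpair /lowvec mulmx_suml raddf_sum /=; congr (_ * _).
under eq_big_nat => j /andP[_ ji].
  rewrite mulmxBl raddfB /= !mxtrace_tens_Qneg_tau2 -?mulrBr; [over | lia..].
rewrite -mulr_sumr big_ltn 1?big_ltn; try lia.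
rewrite pair_term0 // pair_term1 //.
under eq_big_nat => j /andP[j2 ji] do rewrite pair_term_ge2 //.
rewrite sumr_const_nat; congr (_ * _).
have [k ->] : exists k, i = k.+2 by exists (i - 2)%N; lia.
by rewrite subSS subn1 /= -mulr_natr; ring.
Qed.

Theorem proposition5p6 (n i : nat) :
  (3 <= n)%N -> (2 <= i <= n - 1)%N ->
  exists Y : Tens n, Wdual n i Y /\
    exists X : Mat n, g1 n i X /\ tpair n Y (tau2 n i X) != 0.
Proof.
move=> n3 /andP[i2 in1]; have iin : (i < n)%N by lia.
have ile : (i <= n)%N := ltnW iin.
exists (lowvec n i); split.
  move=> U lowest_in_U _; apply: lowest_in_U; split.
  - exact: lowvec_in_lg_zbar.
  - by move=> h; apply: tact_Hdiag_lowvec; lia.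
  - exact: tact_neg_lowvec.
exists (Xwit n i); split; first exact: g1_Xwit.
by rewrite tpair_lowvec_tau2 // !mulf_neq0 ?expf_neq0 ?invr_eq0 ?oppr_eq0 ?pnatr_eq0; lia.
Qed.
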